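(* Let $G$ be a connected graph with $|G|$ vertices and let $(u,v)\in V_p$. If $r_w(u,v)=\frac{1}{|G|}$ for every $w\in V(G)$, then $d(u,v)$ is odd.
   Context: Graphs are finite, simple and connected; $d(u,v)$ denotes the shortest-path distance and $|G|$ the number of vertices. $V_p$ denotes the set of all unordered pairs $(u,v)$ of distinct vertices. A vertex $x$ resolves the pair $(u,v)$ if $d(x,u)\neq d(x,v)$. For $(u,v)\in V_p$, $R(u,v)$ is the set of all vertices resolving $(u,v)$. The resolving share of a vertex $w$ for $(u,v)$ is $r_w(u,v)=\frac{1}{|R(u,v)|}$ if $w$ resolves $u$ and $v$, and $r_w(u,v)=0$ otherwise. *)

From mathcomp Require Import all_boot all_order all_algebra.
Set Implicit Arguments. Unset Strict Implicit. Unset Printing Implicit Defensive.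
Import GRing.Theory Num.Theory.

Definition simple_graph (T : finType) (e : rel T) : Prop :=
  symmetric e /\ irreflexive e.

Definition connected_graph (T : finType) (e : rel T) : Prop :=
  forall x y : T, connect e x y.

Definition walk_of_length (T : finType) (e : rel T) (k : nat) (x y : T) : bool :=
  [exists p : k.-tuple T, path e x p && (last x p == y)].

(* shortest-path distance: least k (< |G|) such that a walk of length k
   from x to y exists; in a connected graph this is d(x,y). *)
Definition dist (T : finType) (e : rel T) (x y : T) : nat :=
  find (fun k => walk_of_length e k x y) (iota 0 #|T|).

Definition resolving_set (T : finType) (e : rel T) (u v : T) : {set T} :=
  [set x | dist e x u != dist e x v].

Definition resolving_share (T : finType) (e : rel T) (w u v : T) : rat :=
  if w \in resolving_set e u v then ((#|resolving_set e u v|%:R)^-1)%R else 0%R.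

(* If every vertex gets the same resolving share 1/|G|, then every vertex
   resolves (u,v).  When d(u,v) is even, the midpoint of a geodesic from u to
   v is at equal distance d(u,v)/2 from both ends, so it does not resolve the
   pair; hence d(u,v) is odd. *)
From mathcomp Require Import all_boot all_order all_algebra.
From mathcomp Require Import zify.
Import GRing.Theory Num.Theory.

Set Implicit Arguments.
Unset Strict Implicit.
Unset Printing Implicit Defensive.

Section Walks.
Variables (T : finType) (e : rel T).

Lemma walk_of_lengthP k x y :
  reflect (exists p : seq T, [/\ size p = k, path e x p & last x p = y])
          (walk_of_length e k x y).
Proof.
apply: (iffP existsP) => [[p /andP[ep /eqP lp]]|[p [sp ep lp]]].
  by exists (val p); rewrite size_tuple.
have sp' : size p == k by apply/eqP.
by exists (Tuple sp'); rewrite /= ep lp eqxx.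
Qed.

Lemma walk_of_length_cat k m x y z :
  walk_of_length e k x y -> walk_of_length e m y z ->
  walk_of_length e (k + m) x z.
Proof.
move=> /walk_of_lengthP[p [<- ep lp]] /walk_of_lengthP[q [<- eq lq]].
by apply/walk_of_lengthP; exists (p ++ q); rewrite size_cat cat_path last_cat lp ep eq.
Qed.

Lemma walk_of_length_split k m x z :
  walk_of_length e (k + m) x z ->
  exists y, walk_of_length e k x y /\ walk_of_length e m y z.
Proof.
move=> /walk_of_lengthP[p [sp ep lp]].
move: ep lp; rewrite -(cat_take_drop k p) cat_path last_cat => /andP[ep1 ep2] lp.
exists (last x (take k p)); split; apply/walk_of_lengthP.
  by exists (take k p); rewrite size_takel // sp leq_addr.
by exists (drop k p); rewrite size_drop sp addKn.
Qed.

Lemma walk_of_length_sym k x y : symmetric e ->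
  walk_of_length e k x y -> walk_of_length e k y x.
Proof.
move=> esym /walk_of_lengthP[p [sp ep lp]]; apply/walk_of_lengthP.
exists (rev (belast x p)); split.
- by rewrite size_rev size_belast.
- by rewrite -lp rev_path (@eq_path _ _ e) // => a b; apply: esym.
- by case: p {sp ep} lp => [|a p] /= <-; rewrite ?rev_cons ?last_rcons.
Qed.

Lemma connect_walk_of_length x y : connect e x y ->
  exists2 k, k < #|T| & walk_of_length e k x y.
Proof.
move=> /connectP[p ep ->]; have [p' ep' up' _] := shortenP ep.
exists (size p'); last by apply/walk_of_lengthP; exists p'.
by have := max_card (mem (x :: p')); rewrite (card_uniqP up').
Qed.

End Walks.

Section Distance.
Variables (T : finType) (e : rel T).
Hypothesis e_connected : connected_graph e.

Lemma has_walk_of_length_lt_card x y :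
  has (fun k => walk_of_length e k x y) (iota 0 #|T|).
Proof.
have [k ltkT wk] := connect_walk_of_length (e_connected x y).
by apply/hasP; exists k; rewrite ?mem_iota.
Qed.

Lemma dist_lt_card x y : dist e x y < #|T|.
Proof.
by have := has_walk_of_length_lt_card x y; rewrite has_find size_iota.
Qed.

Lemma walk_of_length_dist x y : walk_of_length e (dist e x y) x y.
Proof.
by have := nth_find 0 (has_walk_of_length_lt_card x y); rewrite nth_iota ?dist_lt_card.
Qed.

Lemma dist_leq_walk k x y : walk_of_length e k x y -> dist e x y <= k.
Proof.
move=> wk; have [_|leTk] := ltnP k #|T|; last exact: ltnW (leq_trans (dist_lt_card x y) leTk).
rewrite leqNgt; apply/negP => ltkd.
by have := before_find 0 ltkd; rewrite nth_iota ?wk // (ltn_trans ltkd (dist_lt_card x y)).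
Qed.

Lemma dist_triangle x y z : dist e x z <= dist e x y + dist e y z.
Proof. exact/dist_leq_walk/walk_of_length_cat/walk_of_length_dist/walk_of_length_dist. Qed.

Lemma dist_sym x y : symmetric e -> dist e x y = dist e y x.
Proof.
move=> esym; apply/anti_leq.
by rewrite !dist_leq_walk // walk_of_length_sym // walk_of_length_dist.
Qed.

Lemma dist_geodesic_split k m x z : dist e x z = k + m ->
  exists y, dist e x y = k /\ dist e y z = m.
Proof.
move=> dxz; have := walk_of_length_dist x z; rewrite dxz.
move=> /walk_of_length_split[y [wk wm]]; exists y.
have := dist_leq_walk wk; have := dist_leq_walk wm; have := dist_triangle x y z.
lia.
Qed.

End Distance.

Local Open Scope ring_scope.

Lemma mem_resolving_set_of_share (T : finType) (e : rel T) (u v w : T) :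
  resolving_share e w u v = (#|T|%:R)^-1 -> w \in resolving_set e u v.
Proof.
rewrite /resolving_share; case: ifP => // _ /esym/eqP.
rewrite invr_eq0 pnatr_eq0 => /eqP T0.
by have := max_card (pred1 w); rewrite card1 T0.
Qed.

Theorem lemma2p11 (T : finType) (e : rel T) (u v : T) :
  simple_graph e -> connected_graph e -> u != v ->
  (forall w : T, resolving_share e w u v = (#|T|%:R)^-1) ->
  odd (dist e u v).
Proof.
move=> [esym _] conn _ uniform_share.
apply/negPn/negP => even_duv.
have duv : dist e u v = ((dist e u v)./2 + (dist e u v)./2)%N.
  by rewrite addnn -[LHS]odd_double_half (negbTE even_duv).
have [w [duw dwv]] := dist_geodesic_split conn duv.
have := mem_resolving_set_of_share (uniform_share w).
by rewrite inE (dist_sym conn w u esym) duw dwv eqxx.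
Qed.
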